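(* Let $r\ge 2$, let $x_1,\dots,x_{r-1},t\in\mathbb{C}$, and let $G$ be a finite graph (loops and multiple edges allowed) with $n$ vertices, each of degree at least $1$. Let $V=\mathbb{C}^r$, $B=I_r$ (so $B_{ij}=\delta_{ij}$), and let $\mathcal{A}=\{A_1,A_2,\dots\}$ be the symmetric tensors with components $A_1^i=t$ if $i=r$ and $A_1^i=0$ if $i\neq r$, and for $d\ge 2$ $$A_d^{i_1\dots i_d}=\begin{cases} x_i & \text{if } (i_1,\dots,i_d) \text{ is a permutation of } (i,i,r,\dots,r) \text{ for some } i\in\{1,\dots,r-1\},\\ t & \text{if } (i_1,\dots,i_d)=(r,\dots,r),\\ 0&\text{otherwise.}\end{cases}$$ Then $$\mathcal{F}_{\mathcal{A},I_r}(G)=\sum_{|\lambda|\le n} t^{\,n-|\lambda|}\,p_\lambda(x_1,\dots,x_{r-1})\,N_\lambda(G),$$ the sum being over all partitions $\lambda$ (including the empty partition) of weight $|\lambda|\le n$.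
   Context: Graph function: for $G$ with vertices $v_1,\dots,v_n$ of degrees $d_1,\dots,d_n$ and set of half-edges $H$ (each edge, including a loop, consists of two half-edges), $\mathcal{F}_{\mathcal{A},B}(G)=\sum_{c:H\to\{1,\dots,r\}}\prod_{\{h,h'\}\in E(G)}B_{c(h)c(h')}\prod_{k=1}^n A_{d_k}^{c(h_{k,1})\dots c(h_{k,d_k})}$, where $h_{k,1},\dots,h_{k,d_k}$ are the half-edges at $v_k$; i.e. a copy of $A_{d_k}$ is placed at each vertex and contracted along every edge with $B$. A (multi)cycle of $G$ is a $2$-valent subgraph $C$ (every vertex of $C$ has degree $2$ in $C$, loops counted twice; $C$ need not be connected; the empty subgraph is allowed). Its length $|C|$ is its number of edges; if $C_1,\dots,C_l$ are its connected components, its type is the partition $\lambda_C=[|C_1|,\dots,|C_l|]$ of $|C|$. $N_\lambda(G)$ is the number of cycles of $G$ of type $\lambda$. For $k\ge1$, $p_k(x_1,\dots,x_{r-1})=\sum_i x_i^k$, and for a partition $\lambda=[k_1,\dots,k_l]$, $p_\lambda=\prod_{j=1}^l p_{k_j}$ (with $p_\emptyset=1$); $|\lambda|=k_1+\dots+k_l$. *)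

From HB Require Import structures.
From mathcomp Require Import all_boot all_order all_algebra.
From mathcomp Require Import reals.
From mathcomp Require Export complex.
Set Implicit Arguments. Unset Strict Implicit. Unset Printing Implicit Defensive.
Import Order.TTheory GRing.Theory Num.Theory.
Local Open Scope ring_scope.

(* A finite multigraph (loops and multiple edges allowed) with vertex set 'I_n
   is given by a finite type H of half-edges, an incidence map vert : H -> 'I_n
   and a fixed-point-free involution mate : H -> H pairing half-edges into edges
   (an edge {h, mate h} is a loop iff vert h = vert (mate h)). *)

Section Graph.
Variables (n : nat) (H : finType) (vert : H -> 'I_n) (mate : H -> H).

Definition halfedges_at (v : 'I_n) : seq H := enum [pred h | vert h == v].
Definition degree (v : 'I_n) : nat := size (halfedges_at v).

Definition edge_rep (h : H) : bool := (enum_rank h < enum_rank (mate h))%N.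

(* The graph function F_{A,B}(G); A s = A_d^{s_1 ... s_d} with d = size s. *)
Definition graphF (C : nzRingType) (r : nat) (A : seq 'I_r -> C)
  (B : 'I_r -> 'I_r -> C) : C :=
  \sum_(c : {ffun H -> 'I_r})
     ((\prod_(h | edge_rep h) B (c h) (c (mate h))) *
      \prod_(v : 'I_n) A (map c (halfedges_at v))).

(* A subgraph is a set of edges, i.e. a mate-closed set S of half-edges. *)
Definition mate_closed (S : {set H}) : bool := [forall h in S, mate h \in S].

(* degree of v in the subgraph S (loops counted twice) *)
Definition sub_degree (S : {set H}) (v : 'I_n) : nat :=
  #|[set h in S | vert h == v]|.

Definition is_cycle (S : {set H}) : bool :=
  mate_closed S && [forall v, (sub_degree S v == 0%N) || (sub_degree S v == 2%N)].

Definition sub_rel (S : {set H}) : rel H :=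
  fun h h' => [&& h \in S, h' \in S & (mate h == h') || (vert h == vert h')].

Definition components (S : {set H}) : {set {set H}} :=
  [set [set h' in S | connect (sub_rel S) h h'] | h in S].

(* type of S: the partition (nonincreasing list) of the numbers of edges of
   its connected components *)
Definition cycle_type (S : {set H}) : seq nat :=
  sort geq [seq (#|K| %/ 2)%N | K : {set H} <- enum (components S)].

Definition N_type (lam : seq nat) : nat :=
  #|[set S : {set H} | is_cycle S & cycle_type S == lam]|.

End Graph.

(* Partitions of weight <= n are encoded as n-tuples of numbers in [0, n],
   nonincreasing, with sum <= n: the partition is the list of nonzero entries
   (zeros are padding).  This is a bijection. *)
Definition padded_partition (n : nat) (t : n.-tuple 'I_n.+1) : bool :=
  sorted geq [seq val i | i <- t] && (sumn [seq val i | i <- t] <= n)%N.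

Definition part_of (n : nat) (t : n.-tuple 'I_n.+1) : seq nat :=
  [seq k <- [seq val i | i <- t] | k != 0%N].

Definition psum (C : nzRingType) (m : nat) (x : 'I_m -> C) (k : nat) : C :=
  \sum_(i < m) x i ^+ k.
Definition pprod (C : nzRingType) (m : nat) (x : 'I_m -> C) (lam : seq nat) : C :=
  \prod_(k <- lam) psum x k.

(* Colours are 'I_r; colour number r of the
   paper is the one with value r.-1, and colour i+1 of the paper (i < r-1)
   is the one with value i, carrying the variable x i. *)
Definition tensorA (C : nzRingType) (r : nat) (x : 'I_r.-1 -> C) (t : C)
  (s : seq 'I_r) : C :=
  if all (fun c : 'I_r => val c == r.-1) s then t
  else match [pick i : 'I_r.-1 |
                perm_eq [seq val c | c <- s]
                        (val i :: val i :: nseq (size s - 2) r.-1)] with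
       | Some i => x i
       | None => 0
       end.

From HB Require Import structures.
From mathcomp Require Import all_boot all_order all_algebra.
From mathcomp Require Import reals complex.
Import GRing.Theory Num.Theory.
Set Implicit Arguments. Unset Strict Implicit. Unset Printing Implicit Defensive.
Local Open Scope ring_scope.

(* Call colour r "blank".  With B the identity only colourings constant on
   every edge contribute, and the tensor at a vertex v vanishes unless v
   carries either no non-blank half-edge (factor t) or exactly two, both of
   the same colour i (factor x_i).  Hence the contributing colourings are
   those whose non-blank half-edges form a cycle C, coloured constantly on
   each connected component of C; they are parametrised by a colour in
   {1, ..., r-1} per component.  A component with k edges passes through k
   vertices, so summing over the colours gives t^(n-|C|) p_(type C), and
   grouping the cycles by type gives the formula. *)

Lemma size_le_sumn (s : seq nat) : all (fun k => k != 0%N) s -> (size s <= sumn s)%N.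
Proof.
elim: s => //= k s IHs /andP[k_gt0 /IHs size_s].
by rewrite -add1n leq_add // lt0n.
Qed.

Lemma leq_sumn (s : seq nat) k : k \in s -> (k <= sumn s)%N.
Proof. by move=> ks; rewrite sumnE (big_rem k) //= leq_addr. Qed.

Lemma exists_ord_tuple n m (s : seq nat) :
  size s = n -> all (fun k => k < m)%N s -> exists u : n.-tuple 'I_m, map val u = s.
Proof.
move=> size_s s_lt.
have val_pmap : map val (pmap insub s : seq 'I_m) = s.
  by rewrite (pmap_filter (@insubK _ _ _)) (eq_filter (isSome_insub _)) (all_filterP s_lt).
have size_pmap : size (pmap insub s : seq 'I_m) == n.
  by rewrite -(size_map val) val_pmap size_s.
by exists (Tuple size_pmap).
Qed.

Lemma geq_total : total geq.
Proof. by move=> a b; apply: leq_total. Qed.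

Lemma geq_trans : transitive geq.
Proof. by move=> a b c /= ab bc; apply: leq_trans ab. Qed.

Lemma geq_anti : antisymmetric geq.
Proof. by move=> a b /andP[ba ab]; apply/anti_leq/andP. Qed.

Section PaddedPartitions.
Variable n : nat.
Local Notation nonzero := (fun k : nat => k != 0%N).

Lemma perm_padded (lam : n.-tuple 'I_n.+1) :
  perm_eq [seq val i | i <- lam] (part_of lam ++ nseq (n - size (part_of lam)) 0%N).
Proof.
set s := [seq val i | i <- lam]; rewrite -(perm_filterC nonzero s) perm_cat2l.
have size_zeros : size (filter (predC nonzero) s) = (n - size (part_of lam))%N.
  rewrite size_filter /part_of -/s size_filter.
  by have := count_predC nonzero s; rewrite size_map size_tuple => <-; rewrite addKn.
suff /all_pred1P-> : all (pred1 0%N) (filter (predC nonzero) s) by rewrite size_zeros.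
by apply/allP => k; rewrite mem_filter /= negbK => /andP[].
Qed.

Lemma padded_partition_inj (lam lam' : n.-tuple 'I_n.+1) :
  padded_partition lam -> padded_partition lam' -> part_of lam = part_of lam' -> lam = lam'.
Proof.
case/andP=> sorted_lam _ /andP[sorted_lam' _] eq_part.
apply/val_inj/(inj_map val_inj)/(sorted_eq geq_trans geq_anti) => //.
by rewrite (permPl (perm_padded lam)) eq_part perm_sym perm_padded.
Qed.

Lemma padded_partition_exists (l : seq nat) :
  sorted geq l -> all nonzero l -> (sumn l <= n)%N ->
  exists2 lam : n.-tuple 'I_n.+1, padded_partition lam & part_of lam = l.
Proof.
move=> sorted_l l_nonzero sumn_l.
have size_l : (size l <= n)%N := leq_trans (size_le_sumn l_nonzero) sumn_l.
set L := sort geq (l ++ nseq (n - size l) 0%N).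
have [lam val_lam] : exists lam : n.-tuple 'I_n.+1, map val lam = L.
  apply: exists_ord_tuple.
  - by rewrite size_sort size_cat size_nseq subnKC.
  - apply/allP => k; rewrite mem_sort mem_cat mem_nseq ltnS.
    by case/orP=> [/leq_sumn/leq_trans-> //|/andP[_ /eqP->]].
exists lam; rewrite /padded_partition /part_of val_lam.
  rewrite (sort_sorted geq_total) (perm_sumn (permEl (perm_sort _ _))).
  by rewrite sumn_cat sumn_nseq addn0.
rewrite (filter_sort geq_total geq_trans) filter_cat filter_nseq cats0.
by rewrite (all_filterP l_nonzero) (sorted_sort geq_trans).
Qed.

Lemma sum_padded_partitions (V : nmodType) (X : finType) (P : pred X) (ty : X -> seq nat)
    (F : seq nat -> V) :
  (forall S, P S -> [/\ sorted geq (ty S), all nonzero (ty S) & (sumn (ty S) <= n)%N]) ->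
  \sum_(lam : n.-tuple 'I_n.+1 | padded_partition lam)
      F (part_of lam) *+ #|[set S | P S & ty S == part_of lam]|
  = \sum_(S | P S) F (ty S).
Proof.
move=> ty_partition.
under eq_bigr => lam _.
  rewrite -sumr_const; under eq_bigr => S do rewrite inE => /andP[_ /eqP <-].
  over.
rewrite (exchange_big_dep P) /=; last by move=> lam S _; rewrite inE => /andP[].
apply: eq_bigr => S PS; have [sorted_ty ty_nonzero sumn_ty] := ty_partition S PS.
have [lam0 lam0_padded lam0_ty] := padded_partition_exists sorted_ty ty_nonzero sumn_ty.
rewrite (big_pred1 lam0) // => lam; rewrite inE PS /=.
apply/andP/eqP => [[lam_padded /eqP ty_lam]|->]; last by rewrite lam0_ty.
by apply: padded_partition_inj; rewrite // lam0_ty.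
Qed.

End PaddedPartitions.

Lemma perm_pair_nseq (T : eqType) (b i : T) (s : seq T) : i != b ->
  perm_eq s [:: i, i & nseq (size s - 2) b] =
  (count (predC1 b) s == 2%N) && all (fun a => (a == b) || (a == i)) s.
Proof.
move=> i_neq_b; apply/idP/andP => [s_perm | [/eqP count_s s_bi]].
  split; first by rewrite (permP s_perm) /= count_nseq /= i_neq_b eqxx.
  apply/allP => a; rewrite (perm_mem s_perm) !inE mem_nseq.
  by case/or3P=> [->|->|/andP[_ ->]]; rewrite ?orbT.
rewrite -(perm_filterC (predC1 b) s).
have -> : filter (predC1 b) s = nseq 2 i.
  rewrite -count_s -size_filter; apply/all_pred1P/allP => a.
  rewrite mem_filter => /andP[/= /negbTE a_neq_b /(allP s_bi)].
  by rewrite a_neq_b.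
suff -> : filter (predC (predC1 b)) s = nseq (size s - 2) b by [].
rewrite -count_s -(count_predC (predC1 b) s) addKn -size_filter.
by apply/all_pred1P/allP => a; rewrite mem_filter /= negbK => /andP[].
Qed.

Section Tensor.
Variables (C : nzRingType) (r' : nat) (x : 'I_r'.+1 -> C) (t : C).
Local Notation T := (@tensorA C r'.+2 x t).
Local Notation nonblank := (fun a : 'I_r'.+2 => val a != r'.+1).
Local Notation blank_or i := (fun a : 'I_r'.+2 => (val a == r'.+1) || (val a == i)).

Lemma all_blank (s : seq 'I_r'.+2) :
  all (fun a : 'I_r'.+2 => val a == r'.+1) s = (count nonblank s == 0%N).
Proof. by rewrite eqn0Ngt -has_count -all_predC; apply: eq_all => a; rewrite /= negbK. Qed.

Lemma perm_tensor_index (s : seq 'I_r'.+2) (i : 'I_r'.+1) :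
  perm_eq [seq val a | a <- s] [:: val i, val i & nseq (size s - 2) r'.+1] =
  (count nonblank s == 2%N) && all (blank_or i) s.
Proof.
by rewrite -(size_map val) perm_pair_nseq ?neq_ltn ?ltn_ord // count_map all_map.
Qed.

Lemma tensorA_blank (s : seq 'I_r'.+2) : count nonblank s = 0%N -> T s = t.
Proof. by move=> s_blank; rewrite /tensorA all_blank s_blank. Qed.

Lemma tensorA_pair (s : seq 'I_r'.+2) (i : 'I_r'.+1) :
  count nonblank s = 2%N -> all (blank_or i) s -> T s = x i.
Proof.
move=> count_s s_i; rewrite /tensorA all_blank count_s /=.
case: pickP => [j|/(_ i)]; rewrite perm_tensor_index count_s ?s_i //= => s_j.
have [a a_s a_nonblank] : exists2 a, a \in s & nonblank a.
  by apply/hasP; rewrite has_count count_s.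
move: (allP s_i a a_s) (allP s_j a a_s); rewrite (negbTE a_nonblank) /=.
by move=> /eqP a_i /eqP a_j; congr (x _); apply: val_inj; rewrite /= -a_i -a_j.
Qed.

Lemma tensorA_eq0 (s : seq 'I_r'.+2) : count nonblank s != 0%N ->
  (forall i : 'I_r'.+1, count nonblank s = 2%N -> ~~ all (blank_or i) s) -> T s = 0.
Proof.
move=> /negbTE s_nonblank s_not_pair; rewrite /tensorA all_blank s_nonblank.
case: pickP => // i; rewrite perm_tensor_index => /andP[/eqP count_s s_i].
by case/negP: (s_not_pair i count_s).
Qed.

End Tensor.

Section Graph.
Variables (n : nat) (H : finType) (vert : H -> 'I_n) (mate : H -> H).
Hypotheses (mate_inv : involutive mate) (mate_nofix : forall h, mate h != h).

Section Components.
Variable S : {set H}.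
Local Notation P := (components vert mate S).
Local Notation adj := (sub_rel vert mate S).

Lemma sub_rel_sym : symmetric adj.
Proof.
move=> a b; rewrite /sub_rel andbCA [vert b == _]eq_sym.
by congr [&& _, _ & _ || _]; apply/eqP/eqP => <-; rewrite mate_inv.
Qed.

Lemma connect_sub_rel_equiv : {in S & &, equivalence_rel (connect adj)}.
Proof.
move=> a b c _ _ _; split=> [|ab]; first exact: connect0.
by apply/idP/idP; apply: connect_trans; rewrite // (sym_connect_sym sub_rel_sym).
Qed.

Lemma components_partition : partition P S.
Proof. exact: (equivalence_partitionP connect_sub_rel_equiv). Qed.

Lemma cover_components : cover P = S.
Proof. by case/and3P: components_partition => /eqP. Qed.

Lemma trivIset_components : trivIset P.
Proof. by case/and3P: components_partition. Qed.

Lemma set0_notin_components : set0 \notin P.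
Proof. by case/and3P: components_partition. Qed.

Lemma mem_pblock_components a b : a \in S -> b \in S ->
  (b \in pblock P a) = connect adj a b.
Proof. exact: (pblock_equivalence_partition connect_sub_rel_equiv). Qed.

Lemma mem_pblock_self h : h \in S -> h \in pblock P h.
Proof. by rewrite mem_pblock cover_components. Qed.

Lemma pblock_components h : h \in S -> pblock P h \in P.
Proof. by move=> hS; rewrite pblock_mem ?cover_components. Qed.

Lemma component_sub K h : K \in P -> h \in K -> h \in S.
Proof. by move=> KP hK; rewrite -cover_components; apply/bigcupP; exists K. Qed.

Lemma pblock_component K h : K \in P -> h \in K -> pblock P h = K.
Proof. exact: def_pblock trivIset_components. Qed.

Lemma pblock_sub_rel a b : adj a b -> pblock P a = pblock P b.
Proof.
move=> ab; have /and3P[aS bS _] := ab.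
have : b \in pblock P a by rewrite mem_pblock_components // connect1.
by move/(same_pblock trivIset_components).
Qed.

End Components.

Lemma edge_rep_mate h : ~~ edge_rep mate h -> edge_rep mate (mate h).
Proof.
rewrite /edge_rep mate_inv -leqNgt leq_eqVlt => /orP[/eqP/val_inj/enum_rank_inj h_mate|//].
by case/eqP: (mate_nofix h).
Qed.

Lemma mem_halfedges_at h v : (h \in halfedges_at vert v) = (vert h == v).
Proof. by rewrite mem_enum. Qed.

Lemma sub_degree_gt0 (S : {set H}) h : h \in S -> sub_degree vert S (vert h) != 0%N.
Proof.
by move=> hS; rewrite -lt0n card_gt0; apply/set0Pn; exists h; rewrite inE hS eqxx.
Qed.

Section Cycle.
Variable S : {set H}.
Hypothesis S_cycle : is_cycle vert mate S.
Local Notation P := (components vert mate S).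
Local Notation adj := (sub_rel vert mate S).
Local Notation deg := (sub_degree vert S).

Lemma mem_mate_cycle h : (mate h \in S) = (h \in S).
Proof.
have /andP[/forallP closed _] := S_cycle.
by apply/idP/idP => [/(implyP (closed _))|/(implyP (closed _)) //]; rewrite mate_inv.
Qed.

Lemma sub_rel_mate h : h \in S -> adj h (mate h).
Proof. by move=> hS; rewrite /sub_rel hS mem_mate_cycle hS eqxx. Qed.

Lemma sub_degree_cycle v : deg v != 0%N -> deg v = 2%N.
Proof. by case/andP: S_cycle => _ /forallP /(_ v) /orP[/eqP->|/eqP->]. Qed.

Definition vertex_component (v : 'I_n) : {set H} :=
  if [pick h in S | vert h == v] is Some h then pblock P h else set0.

Lemma vertex_componentE h : h \in S -> vertex_component (vert h) = pblock P h.
Proof.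
move=> hS; rewrite /vertex_component; case: pickP => [h0 /andP[h0S /eqP h0h]|/(_ h)].
  by apply: pblock_sub_rel; rewrite /sub_rel h0S hS h0h eqxx orbT.
by rewrite hS eqxx.
Qed.

Lemma vertex_component_mem v : deg v != 0%N -> vertex_component v \in P.
Proof.
rewrite -lt0n card_gt0 => /set0Pn[h]; rewrite inE => /andP[hS /eqP <-].
by rewrite vertex_componentE // pblock_components.
Qed.

Definition component_vertices (K : {set H}) : {set 'I_n} :=
  [set v | (deg v != 0%N) && (vertex_component v == K)].

Lemma card_component K : K \in P -> #|K| = (#|component_vertices K| * 2)%N.
Proof.
move=> KP; rewrite -sum1_card (partition_big vert predT) //= -sum_nat_const.
rewrite [RHS]big_mkcond; apply: eq_bigr => v _; rewrite sum1dep_card inE.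
have [v_K|v_notK] := ifPn.
  case/andP: v_K => deg_v /eqP v_K; rewrite -(sub_degree_cycle deg_v).
  apply: eq_card => h; rewrite !inE; apply/andP/andP => [[hK hv]|[hS /eqP hv]].
    by split; first exact: component_sub hK.
  by rewrite -v_K -hv vertex_componentE // mem_pblock_self.
apply: eq_card0 => h; rewrite !inE; apply/andP => -[hK /eqP hv].
have hS := component_sub KP hK; case/negP: v_notK.
by rewrite -hv sub_degree_gt0 // vertex_componentE // (pblock_component KP hK) eqxx.
Qed.

Lemma half_card_component K : K \in P -> (#|K| %/ 2)%N = #|component_vertices K|.
Proof. by move=> KP; rewrite card_component // mulnK. Qed.

Local Notation type := (cycle_type vert mate S).

Lemma perm_cycle_type : perm_eq type [seq (#|K| %/ 2)%N | K : {set H} <- enum P].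
Proof. by rewrite /cycle_type perm_sort. Qed.

Lemma sumn_cycle_type : sumn type = #|[set v | deg v != 0%N]|.
Proof.
rewrite (perm_sumn perm_cycle_type) sumnE big_map big_enum /= -sum1_card.
rewrite (partition_big vertex_component (mem P)) /=; last first.
  by move=> v; rewrite inE; apply: vertex_component_mem.
apply: eq_bigr => K KP; rewrite half_card_component // sum1dep_card.
by apply: eq_card => v; rewrite !inE.
Qed.

Lemma card_off_cycle : #|[set v | deg v == 0%N]| = (n - sumn type)%N.
Proof.
have <- : #|~: [set v | deg v == 0%N]| = sumn type.
  by rewrite sumn_cycle_type; apply: eq_card => v; rewrite !inE.
by rewrite -[X in (X - _)%N](card_ord n) -(cardsC [set v | deg v == 0%N]) addnK.
Qed.

Lemma cycle_type_partition :
  [/\ sorted geq type, all (fun k => k != 0%N) type & (sumn type <= n)%N].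
Proof.
split; first exact: (sort_sorted geq_total).
  apply/allP => k; rewrite (perm_mem perm_cycle_type).
  case/mapP=> K; rewrite mem_enum => KP ->.
  have /set0Pn[h hK] : K != set0 by apply: contraNneq (set0_notin_components S) => <-.
  have hS := component_sub KP hK; rewrite half_card_component // -lt0n card_gt0.
  apply/set0Pn; exists (vert h).
  by rewrite inE sub_degree_gt0 // vertex_componentE // (pblock_component KP hK) eqxx.
by rewrite sumn_cycle_type -[X in (_ <= X)%N]card_ord max_card.
Qed.

End Cycle.

Section Colourings.
Variables (C : comNzRingType) (r' : nat) (x : 'I_r'.+1 -> C) (t : C).

Local Notation colouring := {ffun H -> 'I_r'.+2}.
Local Notation nonblank := (fun a : 'I_r'.+2 => val a != r'.+1).

Definition weight (c : colouring) : C :=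
  (\prod_(h | edge_rep mate h) (1%:M : 'M[C]_r'.+2) (c h) (c (mate h))) *
  \prod_(v : 'I_n) @tensorA C r'.+2 x t (map c (halfedges_at vert v)).

Lemma graphF_weight :
  graphF vert mate (@tensorA C r'.+2 x t) (fun i j => (1%:M : 'M[C]_r'.+2) i j) =
  \sum_(c : colouring) weight c.
Proof. by []. Qed.

Definition edge_constant (c : colouring) := [forall h, c h == c (mate h)].

Definition coloured (c : colouring) := [set h | nonblank (c h)].

Definition vertex_constant (c : colouring) :=
  [forall h, forall h',
     [&& h \in coloured c, h' \in coloured c & vert h == vert h'] ==> (c h == c h')].

Definition admissible (c : colouring) := edge_constant c && vertex_constant c.

Lemma prod_edges_identity (c : colouring) :
  \prod_(h | edge_rep mate h) (1%:M : 'M[C]_r'.+2) (c h) (c (mate h)) =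
  (edge_constant c)%:R.
Proof.
have [c_const|/forallPn[h /negbTE c_h]] := boolP (edge_constant c).
  by rewrite big1 // => h _; rewrite mxE (eqP (forallP c_const h)) eqxx.
have [h_rep|/edge_rep_mate mate_rep] := boolP (edge_rep mate h).
  by rewrite (bigD1 h) //= mxE c_h mul0r.
by rewrite (bigD1 (mate h)) //= mxE mate_inv eq_sym c_h mul0r.
Qed.

Lemma count_nonblank_halfedges (c : colouring) v :
  count nonblank (map c (halfedges_at vert v)) = sub_degree vert (coloured c) v.
Proof.
rewrite count_map -size_filter /sub_degree -(card_uniqP _); last first.
  exact/filter_uniq/enum_uniq.
by apply: eq_card => h; rewrite mem_filter mem_halfedges_at !inE andbC.
Qed.

Lemma weight_eq0_edge (c : colouring) : ~~ edge_constant c -> weight c = 0.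
Proof.
by move=> /negbTE c_not_const; rewrite /weight prod_edges_identity c_not_const mul0r.
Qed.

Lemma weight_eq0_vertex (c : colouring) : ~~ vertex_constant c -> weight c = 0.
Proof.
case/forallPn=> h /forallPn[h']; rewrite negb_imply => /andP[/and3P[hc h'c /eqP hh'] c_hh'].
rewrite /weight (bigD1 (vert h)) //= tensorA_eq0 ?mul0r ?mulr0 //.
  by rewrite count_nonblank_halfedges sub_degree_gt0.
move=> i _; apply/negP => /allP c_i.
have colour_i a : a \in coloured c -> vert a == vert h -> val (c a) = i.
  rewrite inE -mem_halfedges_at => /negbTE a_nonblank /(map_f c) /c_i.
  by rewrite a_nonblank => /eqP.
by case/negP: c_hh'; rewrite -val_eqE !colour_i ?hh'.
Qed.

Lemma weight_eq0_noncycle (c : colouring) :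
  ~~ is_cycle vert mate (coloured c) -> weight c = 0.
Proof.
have [c_const|/weight_eq0_edge//] := boolP (edge_constant c).
have closed : mate_closed mate (coloured c).
  by apply/forallP => h; apply/implyP; rewrite !inE (eqP (forallP c_const h)).
rewrite /is_cycle closed => /forallPn[v]; rewrite negb_or => /andP[deg_v_nz deg_v_n2].
rewrite /weight (bigD1 v) //= tensorA_eq0 ?mul0r ?mulr0 ?count_nonblank_halfedges //.
by move=> i /eqP; rewrite (negbTE deg_v_n2).
Qed.

Section ColouringsOfCycle.
Variable S : {set H}.
Hypothesis S_cycle : is_cycle vert mate S.
Local Notation P := (components vert mate S).
Local Notation deg := (sub_degree vert S).
Local Notation type := (cycle_type vert mate S).

Definition colouring_of (f : {ffun {set H} -> 'I_r'.+1}) : colouring :=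
  [ffun h => if h \in S then widen_ord (leqnSn _) (f (pblock P h)) else ord_max].

Definition component_colours (c : colouring) : {ffun {set H} -> 'I_r'.+1} :=
  [ffun K => if K \in P then
     (if [pick h in K] is Some h then inord (c h) else ord0) else ord0].

Definition zero_off_components (f : {ffun {set H} -> 'I_r'.+1}) :=
  [forall K, (K \notin P) ==> (f K == ord0)].

Lemma coloured_colouring_of f : coloured (colouring_of f) = S.
Proof.
apply/setP => h; rewrite !inE ffunE.
by case: ifP => _ /=; rewrite ?eqxx // neq_ltn ltn_ord.
Qed.

Lemma admissible_colouring_of f : admissible (colouring_of f).
Proof.
apply/andP; split; apply/forallP => h.
  rewrite !ffunE (mem_mate_cycle S_cycle); case: ifP => // hS.
  by rewrite (pblock_sub_rel (sub_rel_mate S_cycle hS)).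
apply/forallP => h'; apply/implyP; rewrite coloured_colouring_of => /and3P[hS h'S hh'].
by rewrite !ffunE hS h'S (@pblock_sub_rel _ h h') // /sub_rel hS h'S hh' orbT.
Qed.

Lemma colouring_ofK f : zero_off_components f -> component_colours (colouring_of f) = f.
Proof.
move=> /forallP f_zero; apply/ffunP => K; rewrite ffunE.
have [KP|/negbTE KnP] := boolP (K \in P); last by move: (f_zero K); rewrite KnP => /eqP.
case: pickP => [h hK|K0]; last first.
  have K_set0 : K = set0 by apply/setP => h; rewrite inE K0.
  by rewrite K_set0 (negbTE (set0_notin_components S)) in KP.
rewrite ffunE (component_sub KP hK) (pblock_component KP hK).
by apply: val_inj; rewrite /= inordK.
Qed.

Lemma admissible_connect_colour (c : colouring) a b : admissible c ->
  connect (sub_rel vert mate (coloured c)) a b -> c a = c b.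
Proof.
case/andP=> /forallP c_edge /forallP c_vertex /connectP[p].
elim: p a => [|y p IHp] a /=; first by move=> _ ->.
case/andP=> /and3P[ac yc /orP[/eqP <-|vert_ay]] path_y b_last.
  by rewrite -(IHp _ path_y b_last); apply/eqP.
rewrite -(IHp _ path_y b_last).
by apply/eqP/(implyP (forallP (c_vertex a) y)); rewrite ac yc.
Qed.

Lemma component_coloursK (c : colouring) :
  coloured c = S -> admissible c -> colouring_of (component_colours c) = c.
Proof.
move=> c_S c_adm; apply/ffunP => h; rewrite !ffunE.
have [hS|hnS] := ifPn; last by apply: val_inj; move: hnS; rewrite -c_S inE negbK => /eqP.
rewrite pblock_components //.
case: pickP => [h0 h0K|/(_ h)]; last by rewrite mem_pblock_self.
have h0S := component_sub (pblock_components hS) h0K.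
have c_h0h : c h0 = c h.
  apply: admissible_connect_colour => //; rewrite c_S (sym_connect_sym (sub_rel_sym S)).
  by rewrite -mem_pblock_components.
apply: val_inj; rewrite /= c_h0h inordK // -ltnS ltn_neqAle ltn_ord andbT.
by move: hS; rewrite -c_S inE.
Qed.

Lemma weight_colouring_of f : weight (colouring_of f) =
  t ^+ #|[set v | deg v == 0%N]| * \prod_(K in P) x (f K) ^+ (#|K| %/ 2).
Proof.
have /andP[c_edge _] := admissible_colouring_of f.
rewrite /weight prod_edges_identity c_edge mul1r.
rewrite (eq_bigr (fun v => if deg v == 0%N then t else x (f (vertex_component S v)))).
  rewrite (bigID (fun v => deg v == 0%N)) /= -prodr_const; congr (_ * _).
    by apply: eq_big => [v|v ->]; rewrite ?inE.
  rewrite (partition_big (vertex_component S) (mem P)) /=; last first.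
    by move=> v; apply: vertex_component_mem.
  apply: eq_bigr => K KP; rewrite (half_card_component S_cycle) // -prodr_const.
  by apply: eq_big => [v|v /andP[/negbTE-> /eqP->]]; rewrite ?inE.
move=> v _; have [deg_v|deg_v] := ifPn.
  apply: tensorA_blank.
  by rewrite count_nonblank_halfedges coloured_colouring_of (eqP deg_v).
apply: tensorA_pair.
  by rewrite count_nonblank_halfedges coloured_colouring_of (sub_degree_cycle S_cycle).
apply/allP => _ /mapP[h + ->]; rewrite mem_halfedges_at ffunE => /eqP <-.
by case: ifP => hS; rewrite /= ?eqxx // vertex_componentE // eqxx orbT.
Qed.

Lemma zero_off_componentsE f :
  [&& coloured (colouring_of f) == S, admissible (colouring_of f)
    & component_colours (colouring_of f) == f] = zero_off_components f.
Proof.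
apply/idP/idP => [/and3P[_ _ /eqP <-]|f_zero].
  by apply/forallP => K; apply/implyP => /negbTE KnP; rewrite ffunE KnP.
by rewrite coloured_colouring_of admissible_colouring_of colouring_ofK ?eqxx.
Qed.

Lemma pprod_cycle_type :
  pprod x type = \prod_(K in P) \sum_(i < r'.+1) x i ^+ (#|K| %/ 2).
Proof. by rewrite /pprod (perm_big _ (perm_cycle_type S)) big_map big_enum. Qed.

Lemma sum_weight_coloured :
  \sum_(c | coloured c == S) weight c = t ^+ (n - sumn type) * pprod x type.
Proof.
rewrite -(card_off_cycle S_cycle) pprod_cycle_type.
rewrite (bigID admissible) /= [X in _ + X]big1 ?addr0; last first.
  move=> c /andP[_]; rewrite negb_and.
  by case/orP=> [/weight_eq0_edge|/weight_eq0_vertex].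
rewrite (reindex_onto colouring_of component_colours) /=; last first.
  by move=> c /andP[/eqP c_S c_adm]; apply: component_coloursK.
rewrite (eq_bigl zero_off_components); last first.
  by move=> f; rewrite -andbA zero_off_componentsE.
under eq_bigr do rewrite weight_colouring_of.
rewrite -mulr_sumr (big_distr_big_dep ord0) /=; congr (_ * _); apply: eq_bigl => f.
apply/forallP/pfamilyP => [f_zero|[f_supp _] K]; last first.
  by apply/implyP; apply: contraR => /(subsetP f_supp).
split=> // ; apply/subsetP => K; apply: contraR => KnP.
exact: (implyP (f_zero K)).
Qed.

End ColouringsOfCycle.

Lemma sum_weight :
  \sum_(c : colouring) weight c =
  \sum_(S | is_cycle vert mate S)
     t ^+ (n - sumn (cycle_type vert mate S)) * pprod x (cycle_type vert mate S).
Proof.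
rewrite (partition_big coloured predT) //= (bigID (is_cycle vert mate)) /=.
rewrite [X in _ + X]big1 ?addr0; last first.
  move=> S S_noncycle; apply: big1 => c /eqP c_S.
  by apply: weight_eq0_noncycle; rewrite c_S.
by apply: eq_bigr => S S_cycle; apply: sum_weight_coloured.
Qed.

End Colourings.

End Graph.

Local Open Scope complex_scope.

Theorem theorem2 (R : realType) (r : nat) (hr : (2 <= r)%N)
  (x : 'I_r.-1 -> R[i]) (t : R[i])
  (n : nat) (H : finType) (vert : H -> 'I_n) (mate : H -> H)
  (mate_inv : involutive mate) (mate_nofix : forall h, mate h != h)
  (deg_pos : forall v : 'I_n, (1 <= degree vert v)%N) :
  graphF vert mate (tensorA x t) (fun i j => (1%:M : 'M[R[i]]_r) i j) =
  \sum_(lam : n.-tuple 'I_n.+1 | padded_partition lam)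
     t ^+ (n - sumn (part_of lam)) * pprod x (part_of lam)
       * (N_type vert mate (part_of lam))%:R.
Proof.
case: r hr x => [|[|r']] // _ x.
rewrite graphF_weight sum_weight //.
under [RHS]eq_bigr do rewrite mulr_natr.
rewrite /N_type (sum_padded_partitions (fun l => t ^+ (n - sumn l) * pprod x l)) //.
by move=> S; apply: cycle_type_partition.
Qed.
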